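(* Let $C$ be a differentiable convex curve in $\mathbb{R}^2$, and let $\alpha\colon I\to C$ be a differentiable curve moving in the counterclockwise direction about $C$. Let $L(t)=\{\alpha(t)+s\,n(\alpha(t)) : s\in\mathbb{R}\}$ be the line through $\alpha(t)$ and $x_\alpha(t)$. Suppose $\beta(t)=\alpha(t)+s(t)\,n(\alpha(t))$ is any differentiable curve (not necessarily in $C$) with $\beta(t)\in L(t)\setminus\{x_\alpha(t)\}$ for all $t\in I$. Then $(\beta'(t),n(\alpha(t)))$ is a positive basis of $\mathbb{R}^2$ if and only if $\beta(t)$ lies in the same connected component of $L(t)\setminus\{x_\alpha(t)\}$ as $\alpha(t)$.
   Context: $I=[0,1]$. For a differentiable curve $\alpha$: unit tangent $T=\alpha'/\|\alpha'\|$, inner unit normal $n(\alpha(t))=T'/\|T'\|$, curvature $\kappa(t)=\|T'(t)\|/\|\alpha'(t)\|$, center of curvature $x_\alpha(t)=\alpha(t)+\frac{1}{\kappa(t)}n(\alpha(t))$. A basis $(v,w)$ of $\mathbb{R}^2$ is positive if $\det(v,w)>0$. *)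

From HB Require Import structures.
From mathcomp Require Import all_boot all_order all_algebra.
From mathcomp Require Import all_classical all_reals all_analysis.
Set Implicit Arguments. Unset Strict Implicit. Unset Printing Implicit Defensive.
Import Order.TTheory GRing.Theory Num.Theory.
Import numFieldNormedType.Exports.
Local Open Scope classical_set_scope.
Local Open Scope ring_scope.

Section Defs.
Variable R : realType.
Local Notation V := (R * R)%type.

Definition det2 (v w : V) : R := v.1 * w.2 - v.2 * w.1.
Definition dot2 (v w : V) : R := v.1 * w.1 + v.2 * w.2.
Definition enorm (v : V) : R := Num.sqrt (dot2 v v).

Definition tangent (a : R -> V) (t : R) : V :=
  (enorm (derive1 a t))^-1 *: derive1 a t.
Definition normal (a : R -> V) (t : R) : V :=
  (enorm (derive1 (tangent a) t))^-1 *: derive1 (tangent a) t.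
Definition curvature (a : R -> V) (t : R) : R :=
  enorm (derive1 (tangent a) t) / enorm (derive1 a t).
Definition curv_center (a : R -> V) (t : R) : V :=
  a t + (curvature a t)^-1 *: normal a t.
Definition normal_line (a : R -> V) (t : R) : set V :=
  [set a t + s *: normal a t | s in [set: R]].

Definition convex2 (K : set V) : Prop :=
  forall x y l, K x -> K y -> 0 <= l <= 1 -> K (l *: x + (1 - l) *: y).

(** v is an outward normal of a supporting line of K at x *)
Definition supporting (K : set V) (x v : V) : Prop :=
  v != 0 /\ forall y, K y -> dot2 v (y - x) <= 0.

(** C is a differentiable convex curve: the boundary of a compact convex set
    with nonempty interior, having a unique supporting line at each point. *)
Definition diff_convex_curve (C : set V) : Prop :=
  exists K : set V,
    [/\ convex2 K, compact K, (exists x, interior K x),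
        C = closure K `\` interior K &
        forall x, C x -> forall v w, supporting K x v -> supporting K x w ->
          exists c : R, 0 < c /\ w = c *: v].

(** alpha moves counterclockwise about C on I: at every time the curve C lies
    to the left of the velocity alpha'(t). *)
Definition counterclockwise (C : set V) (a : R -> V) : Prop :=
  forall t, t \in `[0, 1] -> forall y, C y -> 0 <= det2 (derive1 a t) (y - a t).

End Defs.

(* Since the unit tangent T has constant length, T' is orthogonal to T, so
   T' = k J T with J the rotation by +pi/2 and k = det (T, T').  Counterclockwise
   motion forces k > 0: otherwise, by the mean value theorem applied to
   u |-> det (alpha'(t), alpha(u)), the curve would cross to the right of its
   tangent line next to t.  Hence n = J T, kappa = k / |alpha'| and
   x_alpha = alpha + (|alpha'| / k) n.  Writing beta = alpha + s n and
   differentiating <beta, T(t)> gives det (beta', n) = |alpha'| - s k.  So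
   (beta', n) is positive iff s < |alpha'| / k, i.e. iff beta lies on the same
   side of x_alpha on the normal line as alpha (where s = 0). *)

From HB Require Import structures.
From mathcomp Require Import all_boot all_order all_algebra.
From mathcomp Require Import all_classical all_reals all_analysis.
From mathcomp Require Import ring lra.

Set Implicit Arguments.
Unset Strict Implicit.
Unset Printing Implicit Defensive.
Import Order.TTheory GRing.Theory Num.Theory.
Import numFieldNormedType.Exports.
Local Open Scope classical_set_scope.
Local Open Scope ring_scope.

Section Plane.
Variable R : realType.
Local Notation V := (R * R)%type.

Definition rot90 (v : V) : V := (- v.2, v.1).

Lemma dot2Zl (k : R) (v w : V) : dot2 (k *: v) w = k * dot2 v w.
Proof. by rewrite /dot2 /= /GRing.scale /=; ring. Qed.

Lemma dot2Zr (k : R) (v w : V) : dot2 v (k *: w) = k * dot2 v w.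
Proof. by rewrite /dot2 /= /GRing.scale /=; ring. Qed.

Lemma det2Zl (k : R) (v w : V) : det2 (k *: v) w = k * det2 v w.
Proof. by rewrite /det2 /= /GRing.scale /=; ring. Qed.

Lemma det2Zr (k : R) (v w : V) : det2 v (k *: w) = k * det2 v w.
Proof. by rewrite /det2 /= /GRing.scale /=; ring. Qed.

Lemma det2rB (u v w : V) : det2 u (v - w) = det2 u v - det2 u w.
Proof. by rewrite /det2 /=; ring. Qed.

Lemma det2C (v w : V) : det2 v w = - det2 w v.
Proof. by rewrite /det2; ring. Qed.

Lemma det2vv (v : V) : det2 v v = 0.
Proof. by rewrite /det2 mulrC subrr. Qed.

Lemma dot2_rot90l (v w : V) : dot2 (rot90 v) w = det2 v w.
Proof. by rewrite /dot2 /det2 /=; ring. Qed.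

Lemma det2_rot90r (v w : V) : det2 v (rot90 w) = dot2 v w.
Proof. by rewrite /dot2 /det2 /=; ring. Qed.

Lemma dot2_rot90 (v w : V) : dot2 (rot90 v) (rot90 w) = dot2 v w.
Proof. by rewrite dot2_rot90l det2_rot90r. Qed.

Lemma unit_orthogonal_decomp (u v : V) :
  dot2 u u = 1 -> dot2 u v = 0 -> v = det2 u v *: rot90 u.
Proof.
case: u v => a b [c d]; rewrite /dot2 /det2 /rot90 /= /GRing.scale /= => u1 uv.
have E1 : c - (a * d - b * c) * - b = c * (1 - (a * a + b * b)) + a * (a * c + b * d).
  by ring.
have E2 : d - (a * d - b * c) * a = d * (1 - (a * a + b * b)) + b * (a * c + b * d).
  by ring.
by congr pair; apply/eqP; rewrite -subr_eq0 ?E1 ?E2 u1 uv subrr !mulr0 addr0.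
Qed.

Lemma enorm_sqr (v : V) : enorm v ^+ 2 = dot2 v v.
Proof. by rewrite sqr_sqrtr // /dot2 -!expr2 addr_ge0 ?sqr_ge0. Qed.

Lemma enorm_gt0 (v : V) : v != 0 -> 0 < enorm v.
Proof.
case: v => a b nz; rewrite /enorm sqrtr_gt0 /dot2 /= -!expr2.
have [a0|a0] := eqVneq a 0; last by rewrite ltr_pwDl ?sqr_ge0 ?exprn_even_gt0.
rewrite a0 expr0n add0r exprn_even_gt0 //=.
by apply: contraNneq nz => b0; rewrite a0 b0.
Qed.

Lemma enorm_unit (v : V) : dot2 v v = 1 -> enorm v = 1.
Proof. by rewrite /enorm => ->; rewrite sqrtr1. Qed.

Lemma enormZ (k : R) (v : V) : enorm (k *: v) = `|k| * enorm v.
Proof. by rewrite /enorm dot2Zl dot2Zr mulrA -expr2 sqrtrM ?sqr_ge0 ?sqrtr_sqr. Qed.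

Lemma dot2_tangent (a : R -> V) t : derive1 a t != 0 ->
  dot2 (tangent a t) (tangent a t) = 1.
Proof.
move=> /enorm_gt0 n0; rewrite /tangent dot2Zl dot2Zr -enorm_sqr.
by rewrite mulrA -expr2 -exprMn mulVf ?expr1n // gt_eqF.
Qed.

Lemma enorm_scale_tangent (a : R -> V) t : derive1 a t != 0 ->
  derive1 a t = enorm (derive1 a t) *: tangent a t.
Proof. by move=> a'0; rewrite /tangent scalerA mulfV ?scale1r // gt_eqF ?enorm_gt0. Qed.

Section Limits.
Context {T : Type} {F : set_system T} {FF : Filter F}.

Lemma cvg_coord (f : T -> V) (a : V) : f @ F --> a ->
  (fun x => (f x).1) @ F --> a.1 /\ (fun x => (f x).2) @ F --> a.2.
Proof.
by move=> fa; split; apply: (cvg_comp _ _ fa); [exact: cvg_fst | exact: cvg_snd].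
Qed.

Lemma cvg_dot2 (f g : T -> V) (a b : V) : f @ F --> a -> g @ F --> b ->
  (fun x => dot2 (f x) (g x)) @ F --> dot2 a b.
Proof.
move=> /cvg_coord[f1 f2] /cvg_coord[g1 g2].
by apply: cvgD; apply: cvgM.
Qed.

Lemma cvg_det2 (f g : T -> V) (a b : V) : f @ F --> a -> g @ F --> b ->
  (fun x => det2 (f x) (g x)) @ F --> det2 a b.
Proof.
move=> /cvg_coord[f1 f2] /cvg_coord[g1 g2].
by apply: cvgB; apply: cvgM.
Qed.

End Limits.

Lemma derive1_quotient_cvg (W : normedModType R) (f : R -> W) x :
  derivable f x 1 -> (fun h => h^-1 *: (f (h + x) - f x)) @ 0^' --> derive1 f x.
Proof.
rewrite /derivable /derive1.
have -> : (fun h : R => h^-1 *: (f (h *: 1 + x) - f x))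
    = (fun h => h^-1 *: (f (h + x) - f x)).
  by apply/funext => h; rewrite [h *: 1]mulr1.
by [].
Qed.

Lemma derivable_shift_cvg (W : normedModType R) (f : R -> W) x :
  derivable f x 1 -> (fun h => f (h + x)) @ 0^' --> f x.
Proof.
move=> /derivable1_diffP/differentiable_continuous fx.
have shift : (fun h : R => h + x) @ 0^' --> x.
  apply: cvg_within_filter.
  suff : (fun h : R => h + x) @ 0 --> 0 + x by rewrite add0r.
  by apply: cvgD; [exact: cvg_id | exact: cvg_cst].
exact: cvg_comp shift fx.
Qed.

Lemma is_derive1_quotient (f : R -> R) x l :
  (fun h => h^-1 * (f (h + x) - f x)) @ 0^' --> l -> is_derive x 1 f l.
Proof.
have E : (fun h : R => h^-1 *: (f (h *: 1 + x) - f x))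
    = (fun h => h^-1 * (f (h + x) - f x)).
  by apply/funext => h; rewrite [h *: 1]mulr1.
move=> fl; have df : derivable f x 1 by rewrite /derivable E; apply/cvg_ex; exists l.
by apply: DeriveDef => //; rewrite /derive E; exact: cvg_lim.
Qed.

Lemma is_derive_det2r (a : V) (f : R -> V) x : derivable f x 1 ->
  is_derive x 1 (fun u => det2 a (f u)) (det2 a (derive1 f x)).
Proof.
move=> df; apply: is_derive1_quotient.
have -> : (fun h => h^-1 * (det2 a (f (h + x)) - det2 a (f x)))
    = (fun h => det2 a (h^-1 *: (f (h + x) - f x))).
  by apply/funext => h; rewrite det2Zr det2rB.
exact: cvg_det2 (cvg_cst a) (derive1_quotient_cvg df).
Qed.

Lemma itv01_near_point (t e : R) : t \in `[0, 1] -> 0 < e ->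
  exists2 u, u \in `[0, 1] & 0 < `|u - t| < e.
Proof.
rewrite in_itv /= => /andP[t0 t1] e0.
pose d := Num.min (e / 2) (1 / 2).
have d0 : 0 < d by rewrite lt_min !divr_gt0.
have [de d1] : d <= e / 2 /\ d <= 1 / 2 by split; rewrite ge_min lexx ?orbT.
have [ht|ht] := lerP t (1 / 2).
  exists (t + d); first by rewrite in_itv /=; apply/andP; split; lra.
  by rewrite addrC addKr gtr0_norm //; apply/andP; split; lra.
exists (t - d); first by rewrite in_itv /=; apply/andP; split; lra.
by rewrite addrC addKr normrN gtr0_norm //; apply/andP; split; lra.
Qed.

(* Increments [h -> 0] keeping [h + t] in [0, 1]: the hypotheses only hold on
   [0, 1], so at the endpoints difference quotients are taken one-sided. *)
Definition near01 (t : R) : set_system R := within [set h | h + t \in `[0, 1]] 0^'.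

Lemma near01_proper t : t \in `[0, 1] -> ProperFilter (near01 t).
Proof.
move=> tI; apply: Build_ProperFilter.
rewrite /near01 /within /dnbhs /within => /nbhs_norm0P[e /= e0 He].
have [u uI /andP[ut0 ute]] := itv01_near_point tI e0.
by apply: (He (u - t)); rewrite /= ?subrK // -normr_gt0.
Qed.

Lemma near01_itv t : \forall h \near near01 t, h + t \in `[0, 1].
Proof. exact: withinT. Qed.

Lemma near01_quotient_cvg (W : normedModType R) (f : R -> W) t : derivable f t 1 ->
  (fun h => h^-1 *: (f (h + t) - f t)) @ near01 t --> derive1 f t.
Proof. by move=> df; apply: cvg_within_filter; exact: derive1_quotient_cvg. Qed.

Lemma near01_shift_cvg (W : normedModType R) (f : R -> W) t : derivable f t 1 ->
  (fun h => f (h + t)) @ near01 t --> f t.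
Proof. by move=> df; apply: cvg_within_filter; exact: derivable_shift_cvg. Qed.

Lemma unit_derive1_orthogonal (f : R -> V) t : t \in `[0, 1] ->
  (forall u, u \in `[0, 1] -> dot2 (f u) (f u) = 1) -> derivable f t 1 ->
  dot2 (f t) (derive1 f t) = 0.
Proof.
move=> tI f1 df; have G_proper := near01_proper tI.
have c_f : (fun h => f (h + t) + f t) @ near01 t --> f t + f t.
  by apply: cvgD; [exact: near01_shift_cvg | exact: cvg_cst].
have L0 : (fun h => dot2 (h^-1 *: (f (h + t) - f t)) (f (h + t) + f t)) @ near01 t
    --> (0 : R).
  apply: cvg_near_cst; near=> h.
  have hI : h + t \in `[0, 1] by near: h; exact: near01_itv.
  rewrite dot2Zl; have -> : dot2 (f (h + t) - f t) (f (h + t) + f t)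
      = dot2 (f (h + t)) (f (h + t)) - dot2 (f t) (f t) by rewrite /dot2 /=; ring.
  by rewrite !f1 // subrr mulr0.
have E : dot2 (derive1 f t) (f t + f t) = 0.
  exact: cvg_unique _ (cvg_dot2 (near01_quotient_cvg df) c_f) L0.
apply: (@mulfI _ 2); first by rewrite pnatr_eq0.
by rewrite mulr0 -E /dot2 /=; ring.
Unshelve. all: by end_near.
Qed.

Lemma derive1_normal_offset (a b T : R -> V) (s : R -> R) t : t \in `[0, 1] ->
  derivable a t 1 -> derivable b t 1 -> derivable T t 1 ->
  (forall u, u \in `[0, 1] -> dot2 (T u) (T u) = 1) ->
  (forall u, u \in `[0, 1] -> b u = a u + s u *: rot90 (T u)) ->
  dot2 (derive1 b t) (T t) = dot2 (derive1 a t) (T t) + s t * det2 (derive1 T t) (T t).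
Proof.
move=> tI da db dT T1 bE; have G_proper := near01_proper tI.
have sE u : u \in `[0, 1] -> s u = det2 (T u) (b u - a u).
  by move=> uI; rewrite bE // addrC addKr det2Zr det2_rot90r T1 ?mulr1.
(* Dotting with [T t] kills the [s t *: rot90 (T t)] term, so only the continuity
   of [s] enters, never its derivative. *)
have c_s : (fun h => s (h + t)) @ near01 t --> s t.
  have c_ba : (fun h => det2 (T (h + t)) (b (h + t) - a (h + t))) @ near01 t
      --> det2 (T t) (b t - a t).
    by apply: cvg_det2; last apply: cvgB; exact: near01_shift_cvg.
  rewrite (sE t tI); apply: cvg_trans c_ba.
  by apply: near_eq_cvg; near=> h; rewrite [RHS]sE //; near: h; exact: near01_itv.
suff L' : (fun h => dot2 (h^-1 *: (b (h + t) - b t)) (T t)) @ near01 t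
    --> dot2 (derive1 a t) (T t) + s t * det2 (derive1 T t) (T t).
  exact: cvg_unique _ (cvg_dot2 (near01_quotient_cvg db) (cvg_cst (T t))) L'.
have L : (fun h => dot2 (h^-1 *: (a (h + t) - a t)) (T t)
      + s (h + t) * det2 (h^-1 *: (T (h + t) - T t)) (T t)) @ near01 t
    --> dot2 (derive1 a t) (T t) + s t * det2 (derive1 T t) (T t).
  apply: cvgD; first exact: cvg_dot2 (near01_quotient_cvg da) (cvg_cst _).
  by apply: cvgM => //; exact: cvg_det2 (near01_quotient_cvg dT) (cvg_cst _).
apply: cvg_trans L; apply: near_eq_cvg; near=> h.
have hI : h + t \in `[0, 1] by near: h; exact: near01_itv.
rewrite /= !bE //; move: (a (h + t)) (a t) (T (h + t)) (T t) => [? ?] [? ?] [? ?] [? ?].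
by rewrite /dot2 /det2 /= /GRing.scale /=; ring.
Unshelve. all: by end_near.
Qed.

Lemma MVT_between (f df : R -> R) (a b t u : R) :
  (forall x, x \in `[a, b] -> is_derive x 1 f (df x)) ->
  t \in `[a, b] -> u \in `[a, b] -> t != u ->
  exists2 th, 0 < th < 1 & f u - f t = df (t + th * (u - t)) * (u - t).
Proof.
move=> fd + + tu; wlog lt_tu : t u tu / t < u => [W tI uI|].
  have [lt_tu|lt_ut|eq_tu] := ltgtP t u; [exact: W | | by rewrite eq_tu eqxx in tu].
  have [|th /andP[th0 th1] E] := W u t _ lt_ut uI tI; first by rewrite eq_sym.
  exists (1 - th); first by apply/andP; split; lra.
  have -> : t + (1 - th) * (u - t) = u + th * (t - u) by ring.
  by rewrite -opprB E -mulrN opprB.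
rewrite !in_itv /= => /andP[ta tb] /andP[ua ub].
have sub x : x \in `[t, u] -> x \in `[a, b].
  by rewrite !in_itv /= => /andP[? ?]; apply/andP; split; lra.
have [c cI E] := MVT lt_tu (fun x xI => fd x (sub x (subset_itv_oo_cc xI)))
  (derivable_within_continuous (fun x xI => ex_derive (is_derive := fd x (sub x xI)))).
move: cI; rewrite in_itv /= => /andP[tc cu].
exists ((c - t) / (u - t)).
  by rewrite divr_gt0 ?subr_gt0 // ltr_pdivrMr ?subr_gt0 // mul1r ltrD2r.
by rewrite divfK ?subr_eq0 ?gt_eqF // subrKC.
Qed.

Lemma derive_sign_change_lt (f df : R -> R) (t : R) :
  (forall x : R, x \in `[0, 1] -> is_derive x 1 f (df x)) -> t \in `[0, 1] ->
  (\forall h \near 0^', h + t \in `[0, 1] -> h * df (h + t) < 0) ->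
  exists2 u, u \in `[0, 1] & f u < f t.
Proof.
move=> fd tI; rewrite near_withinE => /nbhs_norm0P[e /= e0 He].
have [u uI /andP[ut0 ute]] := itv01_near_point tI e0.
have tu : t != u by apply: contraTneq ut0 => ->; rewrite subrr normr0 ltxx.
have [th /andP[th0 th1] fE] := MVT_between fd tI uI tu.
exists u => //; rewrite -subr_lt0 fE.
have hI : th * (u - t) + t \in `[0, 1].
  by move: tI uI; rewrite !in_itv /= => /andP[? ?] /andP[? ?]; apply/andP; split; nra.
have : th * (u - t) * df (th * (u - t) + t) < 0.
  apply: (He _ _ _ hI) => /=.
  - by rewrite normrM gtr0_norm // -[e]mul1r ltr_pM // ltW.
  - by rewrite mulf_neq0 ?(gt_eqF th0) // -normr_gt0.
by rewrite -mulrA pmulr_rlt0 // mulrC addrC.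
Qed.

Lemma line_punctured_component (p n : V) (r s : R) : dot2 n n = 1 -> 0 < r ->
  connected_component ([set p + u *: n | u in [set: R]] `\ (p + r *: n)) p (p + s *: n)
  <-> s < r.
Proof.
move=> n1 r0; pose coord (x : V) := dot2 (x - p) n.
have coordE u : coord (p + u *: n) = u by rewrite /coord addrC addKr dot2Zl n1 mulr1.
have coord_cont : continuous coord.
  by move=> x; apply: cvg_dot2 (cvg_cst _); apply: cvgB; [exact: cvg_id | exact: cvg_cst].
have line_cont : continuous (fun u : R => p + u *: n).
  by move=> u; apply: cvgD (cvg_cst _) _; apply: cvgZ; [exact: cvg_id | exact: cvg_cst].
split.
  case=> K [Kp Kline Kconn] Ks; rewrite ltNge; apply/negP => rs.
  have Kitv : is_interval (coord @` K).
    apply/connected_intervalP; apply: connected_continuous_connected => //.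
    exact: continuous_subspaceT.
  have [x Kx xr] : (coord @` K) r.
    apply: (Kitv 0 s); last by rewrite (ltW r0) rs.
    - by exists p => //; rewrite -[p in coord p]addr0 -(scale0r n) coordE.
    - by exists (p + s *: n) => //; rewrite coordE.
  have [[u _ xu] xc] := Kline x Kx.
  by apply: xc; rewrite -xu; move: xr; rewrite -xu coordE => ->.
move=> sr; exists ((fun u => p + u *: n) @` [set u | u < r]); last by exists s.
split.
- by exists 0 => //; rewrite scale0r addr0.
- move=> _ [u ur <-]; split; first by exists u.
  by move=> /(congr1 coord); rewrite !coordE => ur'; move: ur; rewrite ur' /= ltxx.
- apply: connected_continuous_connected; last exact: continuous_subspaceT.
  by apply/connected_intervalP => x y _ yr z /andP[_ zy]; exact: le_lt_trans zy yr.
Qed.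

Definition tangent_turn (a : R -> V) (t : R) : R :=
  det2 (tangent a t) (derive1 (tangent a) t).

Section Curve.
Variables (C : set V) (alpha : R -> V).
Hypothesis alphaC : forall t, t \in `[0, 1] -> C (alpha t).
Hypothesis alpha_derivable : forall t, t \in `[0, 1] -> derivable alpha t 1.
Hypothesis alpha'_neq0 : forall t, t \in `[0, 1] -> derive1 alpha t != 0.
Hypothesis tangent_derivable : forall t, t \in `[0, 1] -> derivable (tangent alpha) t 1.
Hypothesis tangent'_neq0 : forall t, t \in `[0, 1] -> derive1 (tangent alpha) t != 0.
Hypothesis alpha_ccw : counterclockwise C alpha.

Lemma derive1_tangentE t : t \in `[0, 1] ->
  derive1 (tangent alpha) t = tangent_turn alpha t *: rot90 (tangent alpha t).
Proof.
move=> tI; apply: unit_orthogonal_decomp; first exact: dot2_tangent (alpha'_neq0 tI).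
apply: unit_derive1_orthogonal tI _ (tangent_derivable tI) => u uI.
exact: dot2_tangent (alpha'_neq0 uI).
Qed.

Lemma tangent_turn_neq0 t : t \in `[0, 1] -> tangent_turn alpha t != 0.
Proof.
move=> tI; apply: contra_neq (tangent'_neq0 tI) => k0.
by rewrite derive1_tangentE // k0 scale0r.
Qed.

Lemma tangent_turn_gt0 t : t \in `[0, 1] -> 0 < tangent_turn alpha t.
Proof.
move=> tI; rewrite lt_def tangent_turn_neq0 //= leNgt; apply/negP => k_lt0.
set a := derive1 alpha t; set T := tangent alpha.
have aT : a = enorm a *: T t := enorm_scale_tangent (alpha'_neq0 tI).
have a_gt0 : 0 < enorm a := enorm_gt0 (alpha'_neq0 tI).
have aT0 : det2 a (T t) = 0 by rewrite {1}aT det2Zl det2vv mulr0.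
have q_neg : \forall h \near 0^', det2 a (h^-1 *: (T (h + t) - T t)) < 0.
  apply: cvgr_lt (cvg_det2 (cvg_cst a) (derive1_quotient_cvg (tangent_derivable tI))) _ _.
  by rewrite {1}aT det2Zl pmulr_rlt0.
have [u uI] : exists2 u, u \in `[0, 1] & det2 a (alpha u) < det2 a (alpha t).
  apply: derive_sign_change_lt (fun x xI => is_derive_det2r a (alpha_derivable xI)) tI _.
  near=> h => hI; have h0 : h != 0 by near: h; exact: nbhs_dnbhs_neq.
  have qh : det2 a (h^-1 *: (T (h + t) - T t)) < 0 by near: h.
  rewrite det2Zr det2rB aT0 subr0 in qh.
  rewrite (enorm_scale_tangent (alpha'_neq0 hI)) det2Zr -/T.
  have n_gt0 := enorm_gt0 (alpha'_neq0 hI).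
  have hh : 0 < h * h by rewrite -expr2 exprn_even_gt0.
  have -> : det2 a (T (h + t)) = h * (h^-1 * det2 a (T (h + t))).
    by rewrite mulrA mulfV ?mul1r.
  by rewrite mulrCA pmulr_rlt0 // mulrA pmulr_rlt0.
rewrite -subr_lt0 -det2rB => /lt_le_trans/(_ (alpha_ccw tI (alphaC uI))).
by rewrite ltxx.
Unshelve. all: by end_near.
Qed.

Lemma enorm_derive1_tangent t : t \in `[0, 1] ->
  enorm (derive1 (tangent alpha) t) = tangent_turn alpha t.
Proof.
move=> tI; rewrite derive1_tangentE // enormZ gtr0_norm ?tangent_turn_gt0 //.
by rewrite enorm_unit ?mulr1 // dot2_rot90 dot2_tangent ?alpha'_neq0.
Qed.

Lemma normal_rot90 t : t \in `[0, 1] -> normal alpha t = rot90 (tangent alpha t).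
Proof.
move=> tI; rewrite /normal enorm_derive1_tangent // derive1_tangentE //.
by rewrite scalerA mulVf ?scale1r ?tangent_turn_neq0.
Qed.

Lemma curvatureE t : t \in `[0, 1] ->
  curvature alpha t = tangent_turn alpha t / enorm (derive1 alpha t).
Proof. by move=> tI; rewrite /curvature enorm_derive1_tangent. Qed.

Lemma curv_centerE t : t \in `[0, 1] -> curv_center alpha t
  = alpha t + (enorm (derive1 alpha t) / tangent_turn alpha t) *: normal alpha t.
Proof. by move=> tI; rewrite /curv_center curvatureE // invf_div. Qed.

Lemma det2_derive1_normal_offset (beta : R -> V) (s : R -> R) t : t \in `[0, 1] ->
  derivable beta t 1 ->
  (forall u, u \in `[0, 1] -> beta u = alpha u + s u *: normal alpha u) ->
  det2 (derive1 beta t) (normal alpha t)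
  = enorm (derive1 alpha t) - s t * tangent_turn alpha t.
Proof.
move=> tI dbeta betaE.
have T1 u : u \in `[0, 1] -> dot2 (tangent alpha u) (tangent alpha u) = 1.
  by move=> uI; exact: dot2_tangent (alpha'_neq0 uI).
have betaN u : u \in `[0, 1] -> beta u = alpha u + s u *: rot90 (tangent alpha u).
  by move=> uI; rewrite betaE // normal_rot90.
rewrite normal_rot90 // det2_rot90r.
rewrite (derive1_normal_offset tI (alpha_derivable tI) dbeta (tangent_derivable tI) T1 betaN).
rewrite derive1_tangentE // det2Zl det2C det2_rot90r T1 //.
by rewrite {1}enorm_scale_tangent ?alpha'_neq0 // dot2Zl T1 // mulr1 mulrN1 mulrN.
Qed.

End Curve.

End Plane.

Theorem lemmaD3 (R : realType) (C : set (R * R)) (alpha beta : R -> R * R)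
  (s : R -> R) :
  diff_convex_curve C ->
  (* alpha : I -> C is a (regular) differentiable curve with differentiable
     unit tangent and nonvanishing T', so that n and kappa are defined *)
  (forall t, t \in `[0, 1] -> C (alpha t)) ->
  (forall t, t \in `[0, 1] -> derivable alpha t 1) ->
  (forall t, t \in `[0, 1] -> derive1 alpha t != 0) ->
  (forall t, t \in `[0, 1] -> derivable (tangent alpha) t 1) ->
  (forall t, t \in `[0, 1] -> derive1 (tangent alpha) t != 0) ->
  counterclockwise C alpha ->
  (* beta(t) = alpha(t) + s(t) n(alpha(t)) is differentiable and avoids x_alpha(t) *)
  (forall t, t \in `[0, 1] -> beta t = alpha t + s t *: normal alpha t) ->
  (forall t, t \in `[0, 1] -> derivable beta t 1) ->
  (forall t, t \in `[0, 1] -> beta t != curv_center alpha t) ->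
  forall t, t \in `[0, 1] ->
    (0 < det2 (derive1 beta t) (normal alpha t) <->
     connected_component (normal_line alpha t `\ curv_center alpha t)
                         (alpha t) (beta t)).
Proof.
move=> _ alphaC da a'0 dT T'0 ccw betaE db _ t tI.
have k_gt0 := tangent_turn_gt0 alphaC da a'0 dT T'0 ccw tI.
rewrite (det2_derive1_normal_offset alphaC da a'0 dT T'0 ccw tI (db t tI) betaE).
rewrite /normal_line (curv_centerE alphaC da a'0 dT T'0 ccw tI) betaE //.
rewrite line_punctured_component; first by rewrite subr_gt0 ltr_pdivlMr // mulrC.
- by rewrite (normal_rot90 alphaC da a'0 dT T'0 ccw tI) dot2_rot90 dot2_tangent ?a'0.
- by rewrite divr_gt0 ?enorm_gt0 ?a'0.
Qed.
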